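(* Let $\kappa$ be an uncountable regular cardinal and let $\mathcal{I}$ be a $\kappa$-complete proper ideal on $\kappa$ containing every bounded subset of $\kappa$. Then $\mathcal{I}$ has the approximation property if and only if there is a partition $\{C_\alpha:\alpha<\kappa\}$ of $\kappa$ such that, setting $D_\alpha=\bigcup_{\beta\le\alpha}C_\beta$, the family $\{D_\alpha:\alpha<\kappa\}$ is a basis for $\mathcal{I}$.
   Context: A basis for $\mathcal{I}$ is a family $\mathcal{B}\subseteq\mathcal{I}$ such that every $D\in\mathcal{I}$ is contained in some member of $\mathcal{B}$. $\mathcal{I}$ has the approximation property if there is a sequence $\langle B_\alpha:\alpha<\kappa\rangle$ of members of $\mathcal{I}$ which is strictly increasing ($B_\alpha\subsetneq B_\beta$ for $\alpha<\beta$) and continuous ($B_\alpha=\bigcup_{\beta<\alpha}B_\beta$ for limit $\alpha$), with $B_0=\emptyset$, and such that for every $B\in\mathcal{I}$ there is $\alpha<\kappa$ with $B\subsetneq B_\alpha$. *)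

(* The cardinal kappa is modelled (up to order isomorphism) as a type K
   equipped with a strict well-order [lt] whose order type is an initial
   ordinal (a cardinal). *)
From Stdlib Require Import Classical.

Definition set (T : Type) := T -> Prop.

Definition injective {A B : Type} (f : A -> B) : Prop :=
  forall x y, f x = f y -> x = y.

Definition card_le (A B : Type) : Prop := exists f : A -> B, injective f.
Definition card_lt (A B : Type) : Prop := card_le A B /\ ~ card_le B A.

Definition strict_well_order {K : Type} (lt : K -> K -> Prop) : Prop :=
  (forall a, ~ lt a a) /\
  (forall a b c, lt a b -> lt b c -> lt a c) /\
  (forall a b, lt a b \/ a = b \/ lt b a) /\
  well_founded lt.

Definition le_of {K : Type} (lt : K -> K -> Prop) (a b : K) : Prop :=
  lt a b \/ a = b.

Definition segment {K : Type} (lt : K -> K -> Prop) (a : K) : Type :=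
  { b : K | lt b a }.

Definition is_cardinal_order {K : Type} (lt : K -> K -> Prop) : Prop :=
  strict_well_order lt /\ forall a : K, card_lt (segment lt a) K.

Definition uncountable (K : Type) : Prop := ~ card_le K nat.

Definition bounded {K : Type} (lt : K -> K -> Prop) (X : set K) : Prop :=
  exists a, forall x, X x -> lt x a.

Definition unbounded {K : Type} (lt : K -> K -> Prop) (X : set K) : Prop :=
  forall a, exists x, X x /\ le_of lt a x.

Definition regular {K : Type} (lt : K -> K -> Prop) : Prop :=
  forall X : set K, unbounded lt X -> card_le K { x : K | X x }.

Definition is_zero {K : Type} (lt : K -> K -> Prop) (a : K) : Prop :=
  forall b, ~ lt b a.

Definition is_limit {K : Type} (lt : K -> K -> Prop) (a : K) : Prop :=
  (exists b, lt b a) /\ (forall b, lt b a -> exists c, lt b c /\ lt c a).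

Definition subset {K : Type} (X Y : set K) : Prop := forall x, X x -> Y x.
Definition psubset {K : Type} (X Y : set K) : Prop :=
  subset X Y /\ exists y, Y y /\ ~ X y.
Definition set_eq {K : Type} (X Y : set K) : Prop := forall x, X x <-> Y x.

Definition is_ideal {K : Type} (I : set (set K)) : Prop :=
  I (fun _ => False) /\
  (forall X Y, I Y -> subset X Y -> I X) /\
  (forall X Y, I X -> I Y -> I (fun x => X x \/ Y x)).

Definition proper_ideal {K : Type} (I : set (set K)) : Prop :=
  is_ideal I /\ ~ I (fun _ => True).

Definition kappa_complete {K : Type} (I : set (set K)) : Prop :=
  forall (J : Type) (F : J -> set K),
    card_lt J K -> (forall j, I (F j)) -> I (fun x => exists j, F j x).

Definition contains_bounded {K : Type} (lt : K -> K -> Prop) (I : set (set K)) : Prop :=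
  forall X, bounded lt X -> I X.

Definition is_basis {K : Type} {J : Type} (I : set (set K)) (B : J -> set K) : Prop :=
  (forall j, I (B j)) /\ (forall D, I D -> exists j, subset D (B j)).

Definition approximation_property {K : Type} (lt : K -> K -> Prop)
    (I : set (set K)) : Prop :=
  exists B : K -> set K,
    (forall a, I (B a)) /\
    (forall a b, lt a b -> psubset (B a) (B b)) /\
    (forall a, is_limit lt a -> set_eq (B a) (fun x => exists b, lt b a /\ B b x)) /\
    (forall a, is_zero lt a -> set_eq (B a) (fun _ => False)) /\
    (forall X, I X -> exists a, psubset X (B a)).

Definition is_partition {K : Type} (C : K -> set K) : Prop :=
  (forall a, exists x, C a x) /\
  (forall a b x, C a x -> C b x -> a = b) /\
  (forall x, exists a, C a x).

Definition cumulative {K : Type} (lt : K -> K -> Prop) (C : K -> set K) (a : K) : set K :=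
  fun x => exists b, le_of lt b a /\ C b x.

From Stdlib Require Import Classical.

(* Given a chain B witnessing the approximation property, take for C_a the
   successor layer B_(a+1) \ B_a.  Since B_0 is empty and B is continuous,
   every point of B_c enters the chain at a successor stage below c; as
   singletons are bounded, hence in I, and lie in some B_c, the layers
   partition kappa, and D_a = B_(a+1) is cofinal in I.  Conversely, for a
   partition C the sets B_a = U_(b<a) C_b form a strictly increasing
   continuous chain with D_a included in B_(a+1), strictly below B_(a+2).
   Both directions only need kappa to have no largest element, which follows
   from regularity and uncountability. *)

Lemma subset_psubset_trans {K : Type} (X Y Z : set K) :
  subset X Y -> psubset Y Z -> psubset X Z.
Proof.
  intros hXY [hYZ [z [hz hYz]]]. split.
  - intros x hx. exact (hYZ x (hXY x hx)).
  - exists z. split; [exact hz |]. intros hXz. exact (hYz (hXY z hXz)).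
Qed.

Section WellOrder.

Variables (K : Type) (lt : K -> K -> Prop).
Hypothesis lt_wo : strict_well_order lt.

Lemma lt_irrefl a : ~ lt a a.
Proof. exact (proj1 lt_wo a). Qed.

Lemma lt_trans a b c : lt a b -> lt b c -> lt a c.
Proof. exact (proj1 (proj2 lt_wo) a b c). Qed.

Lemma lt_total a b : lt a b \/ a = b \/ lt b a.
Proof. exact (proj1 (proj2 (proj2 lt_wo)) a b). Qed.

Lemma well_founded_least (P : K -> Prop) x :
  P x -> exists m, P m /\ forall y, lt y m -> ~ P y.
Proof.
  induction x as [x IH] using (well_founded_ind (proj2 (proj2 (proj2 lt_wo)))).
  intros Px.
  destruct (classic (exists y, lt y x /\ P y)) as [[y [hyx Py]] | hnone].
  - exact (IH y hyx Py).
  - exists x. split; [exact Px |]. intros y hyx Py. apply hnone. eauto.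
Qed.

Lemma not_lt_le a b : ~ lt b a -> le_of lt a b.
Proof. unfold le_of. destruct (lt_total a b) as [h | [h | h]]; tauto. Qed.

Lemma lt_le_trans a b c : lt a b -> le_of lt b c -> lt a c.
Proof. intros hab [hbc | <-]; [exact (lt_trans a b c hab hbc) | exact hab]. Qed.

Lemma le_lt_trans a b c : le_of lt a b -> lt b c -> lt a c.
Proof. intros [hab | ->] hbc; [exact (lt_trans a b c hab hbc) | exact hbc]. Qed.

Lemma regular_uncountable_unbounded :
  uncountable K -> regular lt -> forall a, exists b, lt a b.
Proof.
  intros Hunc Hreg a. apply NNPP. intros hmax.
  assert (htop : unbounded lt (fun x => x = a)).
  { intros c. exists a. split; [reflexivity |].
    apply not_lt_le. intros hac. apply hmax. eauto. }
  destruct (Hreg _ htop) as [f finj].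
  apply Hunc. exists (fun _ => 0). intros x y _. apply finj.
  destruct (f x) as [u hu], (f y) as [v hv]. subst u v. reflexivity.
Qed.

Definition is_succ (a s : K) : Prop := lt a s /\ forall d, lt a d -> ~ lt d s.

Lemma succ_exists a b : lt a b -> exists s, is_succ a s.
Proof.
  intros hab. destruct (well_founded_least (lt a) b hab) as [s [has hmin]].
  exists s. split; [exact has |]. intros d had hds. exact (hmin d hds had).
Qed.

Lemma succ_le a s b : is_succ a s -> lt a b -> le_of lt s b.
Proof. intros [_ hs] hab. apply not_lt_le. exact (hs b hab). Qed.

Lemma zero_limit_or_succ m :
  is_zero lt m \/ is_limit lt m \/ exists b, is_succ b m.
Proof.
  destruct (classic (exists b, lt b m)) as [hpos | hzero].
  - destruct (classic (exists b, is_succ b m)) as [hsucc | hnsucc]; [tauto |].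
    right; left. split; [exact hpos |]. intros b hbm.
    apply NNPP. intros hgap. apply hnsucc. exists b. split; [exact hbm |].
    intros d hbd hdm. apply hgap. eauto.
  - left. intros b hbm. apply hzero. eauto.
Qed.

Section Layers.

Variable B : K -> set K.
Hypothesis B_mono : forall a b, lt a b -> subset (B a) (B b).
Hypothesis B_zero : forall a, is_zero lt a -> set_eq (B a) (fun _ => False).
Hypothesis B_limit :
  forall a, is_limit lt a -> set_eq (B a) (fun x => exists b, lt b a /\ B b x).

Lemma chain_le_subset a b : le_of lt a b -> subset (B a) (B b).
Proof. intros [hab | <-]; [exact (B_mono a b hab) | intros x hx; exact hx]. Qed.

Definition layer (a : K) : set K :=
  fun x => exists s, is_succ a s /\ B s x /\ ~ B a x.

Lemma layer_nonempty a s : is_succ a s -> psubset (B a) (B s) -> exists x, layer a x.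
Proof. intros has [_ [y [hsy hay]]]. exists y, s. auto. Qed.

Lemma layer_lt_disjoint a b x : lt a b -> layer a x -> ~ layer b x.
Proof.
  intros hab [s [has [hsx _]]] [_ [_ [_ hbx]]].
  exact (hbx (chain_le_subset s b (succ_le a s b has hab) x hsx)).
Qed.

Lemma layer_disjoint a b x : layer a x -> layer b x -> a = b.
Proof.
  intros hax hbx. destruct (lt_total a b) as [h | [h | h]]; [| exact h |]; exfalso.
  - exact (layer_lt_disjoint a b x h hax hbx).
  - exact (layer_lt_disjoint b a x h hbx hax).
Qed.

Lemma cumulative_layer_subset a s : is_succ a s -> subset (cumulative lt layer a) (B s).
Proof.
  intros has x [b [hba [s' [hbs' [hs'x _]]]]].
  apply (chain_le_subset s' s); [| exact hs'x].
  exact (succ_le b s' s hbs' (le_lt_trans b a s hba (proj1 has))).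
Qed.

Lemma chain_in_layer c x : B c x -> exists b, lt b c /\ layer b x.
Proof.
  intros hcx.
  destruct (well_founded_least (fun m => B m x) c hcx) as [m [hmx hmin]].
  assert (hmc : le_of lt m c) by (apply not_lt_le; intros h; exact (hmin c h hcx)).
  destruct (zero_limit_or_succ m) as [hz | [hl | [b hbm]]].
  - exfalso. exact (proj1 (B_zero m hz x) hmx).
  - exfalso. destruct (proj1 (B_limit m hl x) hmx) as [b [hbm hbx]].
    exact (hmin b hbm hbx).
  - exists b. split; [exact (lt_le_trans b m c (proj1 hbm) hmc) |].
    exists m. split; [exact hbm |]. split; [exact hmx | exact (hmin b (proj1 hbm))].
Qed.

End Layers.

Section Below.

Variable C : K -> set K.

Definition below (a : K) : set K := fun x => exists b, lt b a /\ C b x.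

Lemma below_subset_cumulative a : subset (below a) (cumulative lt C a).
Proof. intros x [b [hba hbx]]. exists b. split; [left; exact hba | exact hbx]. Qed.

Lemma cumulative_subset_below a b : lt a b -> subset (cumulative lt C a) (below b).
Proof.
  intros hab x [d [hda hdx]]. exists d.
  split; [exact (le_lt_trans d a b hda hab) | exact hdx].
Qed.

Lemma below_zero a : is_zero lt a -> set_eq (below a) (fun _ => False).
Proof. intros hz x. split; [intros [b [hba _]]; exact (hz b hba) | intros []]. Qed.

Lemma below_limit a :
  is_limit lt a -> set_eq (below a) (fun x => exists b, lt b a /\ below b x).
Proof.
  intros [_ hlim] x. split.
  - intros [d [hda hdx]]. destruct (hlim d hda) as [b [hdb hba]].
    exists b. split; [exact hba |]. exists d. split; assumption.
  - intros [b [hba [d [hdb hdx]]]]. exists d.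
    split; [exact (lt_trans d b a hdb hba) | exact hdx].
Qed.

Hypothesis C_nonempty : forall a, exists x, C a x.
Hypothesis C_disjoint : forall a b x, C a x -> C b x -> a = b.

Lemma below_strict a b : lt a b -> psubset (below a) (below b).
Proof.
  intros hab. split.
  - intros x [d [hda hdx]]. exists d. split; [exact (lt_trans d a b hda hab) | exact hdx].
  - destruct (C_nonempty a) as [y hay]. exists y. split; [exists a; split; assumption |].
    intros [d [hda hdy]]. rewrite (C_disjoint d a y hdy hay) in hda.
    exact (lt_irrefl a hda).
Qed.

End Below.

Section Unbounded.

Hypothesis lt_unbounded : forall a, exists b, lt a b.

Lemma succ_exists_unbounded a : exists s, is_succ a s.
Proof. destruct (lt_unbounded a) as [b hab]. exact (succ_exists a b hab). Qed.

Variable I : set (set K).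
Hypothesis I_down : forall X Y, I Y -> subset X Y -> I X.

Lemma approximation_partition_basis :
  contains_bounded lt I -> approximation_property lt I ->
  exists C : K -> set K, is_partition C /\ is_basis I (cumulative lt C).
Proof.
  intros Hbdd [B [HBI [Hstrict [Hlim [Hzero Hcof]]]]].
  assert (Hmono : forall a b, lt a b -> subset (B a) (B b))
    by (intros a b hab; exact (proj1 (Hstrict a b hab))).
  exists (layer B). split; [split; [| split] | split].
  - intros a. destruct (succ_exists_unbounded a) as [s has].
    exact (layer_nonempty B a s has (Hstrict a s (proj1 has))).
  - exact (layer_disjoint B Hmono).
  - intros x. destruct (lt_unbounded x) as [b hxb].
    assert (hsing : I (fun y => y = x)) by (apply Hbdd; exists b; intros y ->; exact hxb).
    destruct (Hcof _ hsing) as [c [hc _]].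
    destruct (chain_in_layer B Hzero Hlim c x (hc x eq_refl)) as [a [_ hax]].
    exists a. exact hax.
  - intros a. destruct (succ_exists_unbounded a) as [s has].
    exact (I_down _ _ (HBI s) (cumulative_layer_subset B Hmono a s has)).
  - intros X HX. destruct (Hcof X HX) as [c [hXc _]]. exists c. intros x hx.
    destruct (chain_in_layer B Hzero Hlim c x (hXc x hx)) as [a [hac hax]].
    exists a. split; [left; exact hac | exact hax].
Qed.

Lemma partition_basis_approximation (C : K -> set K) :
  is_partition C -> is_basis I (cumulative lt C) -> approximation_property lt I.
Proof.
  intros [Cne [Cdis _]] [HDI HDcof].
  exists (below C). split; [| split; [| split; [| split]]].
  - intros a. exact (I_down _ _ (HDI a) (below_subset_cumulative C a)).
  - exact (below_strict C Cne Cdis).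
  - exact (below_limit C).
  - exact (below_zero C).
  - intros X HX. destruct (HDcof X HX) as [a hXa].
    destruct (lt_unbounded a) as [b hab]. destruct (lt_unbounded b) as [c hbc].
    exists c. apply (subset_psubset_trans X (below C b) (below C c)).
    + intros x hx. exact (cumulative_subset_below C a b hab x (hXa x hx)).
    + exact (below_strict C Cne Cdis b c hbc).
Qed.

End Unbounded.

End WellOrder.

Theorem lemma2p2 (K : Type) (lt : K -> K -> Prop)
  (Hcard : is_cardinal_order lt) (Hunc : uncountable K) (Hreg : regular lt)
  (I : set (set K)) (HI : proper_ideal I) (Hcomp : kappa_complete I)
  (Hbdd : contains_bounded lt I) :
  approximation_property lt I <->
  exists C : K -> set K, is_partition C /\ is_basis I (cumulative lt C).
Proof.
  destruct Hcard as [Hwo _].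
  destruct HI as [[_ [Hdown _]] _].
  pose proof (regular_uncountable_unbounded K lt Hwo Hunc Hreg) as Hunb.
  split.
  - exact (approximation_partition_basis K lt Hwo Hunb I Hdown Hbdd).
  - intros [C [HC HD]].
    exact (partition_basis_approximation K lt Hwo Hunb I Hdown C HC HD).
Qed.
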